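(* Consider the uncertain system \[ \dot x = f(x) + g(x)u + \varphi(x,u)\theta,\qquad \varphi(x,u)=[F(x)\;\; G(x)\,\mathrm{diag}(u)]\in\mathbb{R}^{n\times(p+m)}, \] with known locally Lipschitz $f:\mathbb{R}^n\to\mathbb{R}^n$, $g:\mathbb{R}^n\to\mathbb{R}^{n\times m}$, known $F:\mathbb{R}^n\to\mathbb{R}^{n\times p}$, $G:\mathbb{R}^n\to\mathbb{R}^{n\times m}$, and unknown $\theta\in\mathbb{R}^{p+m}$ lying in a known hyperrectangle $\Theta=[\underline{\theta}_1,\overline{\theta}_1]\times\cdots\times[\underline{\theta}_{p+m},\overline{\theta}_{p+m}]$. Let $x(\cdot)$ be a solution of this system under an input signal $u(\cdot)$, defined on an interval $\mathcal{I}\subseteq\mathbb{R}_{\ge0}$. Fix $\Delta t>0$ and for $t\ge\Delta t$ in $\mathcal{I}$ define \[ \Delta x(t)=\int_{t-\Delta t}^t\dot x(s)\,ds,\quad \mathcal{F}(t)=\int_{t-\Delta t}^t f(x(s))\,ds,\quad \mathcal{G}(t)=\int_{t-\Delta t}^t g(x(s))u(s)\,ds,\quad \mathcal{S}(t)=\int_{t-\Delta t}^t\varphi(x(s),u(s))\,ds. \] Let $\{t_k\}_{k\ge0}$ be a strictly increasing sequence of times with $t_0=0$. At each time $t$ a history stack $\{\Delta x_j(t),\mathcal{F}_j(t),\mathcal{G}_j(t),\mathcal{S}_j(t)\}_{j\in\mathcal{M}(t)}$, $\mathcal{M}(t)=\{1,\dots,M(t)\}$, is available, where for each $j$ there is some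 $t_i\in[\Delta t,t]$ with $(\Delta x_j(t),\mathcal{F}_j(t),\mathcal{G}_j(t),\mathcal{S}_j(t))=(\Delta x(t_i),\mathcal{F}(t_i),\mathcal{G}(t_i),\mathcal{S}(t_i))$. Fix $\varepsilon>0$. Set $\Xi_0=\Theta$ and, for $k\ge1$, given $\Xi_{k-1}=\{\theta: A_{k-1}\theta\le b_{k-1}\}$ (its halfspace representation), define for each $i\in\{1,\dots,p+m\}$ \[ \underline{\theta}_i^k=\min\theta_i,\qquad \overline{\theta}_i^k=\max\theta_i \] subject to $-\varepsilon\mathbf{1}_n\le \Delta x_j(t_k)-\mathcal{F}_j(t_k)-\mathcal{G}_j(t_k)-\mathcal{S}_j(t_k)\theta\le\varepsilon\mathbf{1}_n$ for all $j\in\mathcal{M}(t_k)$ and $A_{k-1}\theta\le b_{k-1}$, and set $\Xi_k=[\underline{\theta}_1^k,\overline{\theta}_1^k]\times\cdots\times[\underline{\theta}_{p+m}^k,\overline{\theta}_{p+m}^k]$. Then $\Xi_k\subseteq\Xi_{k-1}\subseteq\Theta$ for all $k\ge1$, and the true parameter satisfies $\theta\in\Xi_k$ for all $k\in\mathbb{Z}_{\ge0}$.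
   Context: $\mathbf{1}_n$ denotes the vector of ones in $\mathbb{R}^n$; vector inequalities are componentwise. $\theta_i$ denotes the $i$th component of $\theta$. $\mathrm{diag}(u)$ is the diagonal matrix with the entries of $u$ on its diagonal. *)

From HB Require Import structures.
From mathcomp Require Import all_boot all_order all_algebra.
From mathcomp Require Import all_classical all_reals all_analysis.
Set Implicit Arguments. Unset Strict Implicit. Unset Printing Implicit Defensive.
Import Order.TTheory GRing.Theory Num.Theory.
Import numFieldNormedType.Exports.
Local Open Scope classical_set_scope.
Local Open Scope ring_scope.

(* max-norm of a matrix (all norms are equivalent in finite dimension) *)
Definition mxmaxnorm (R : realType) (a b : nat) (A : 'M[R]_(a, b)) : R :=
  \big[Num.max/0]_(i < a) \big[Num.max/0]_(j < b) `|A i j|.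

Definition locally_lipschitz (R : realType) (n a b : nat)
    (h : 'cV[R]_n -> 'M[R]_(a, b)) : Prop :=
  forall x0 : 'cV[R]_n, exists r : R, 0 < r /\ exists L : R,
    forall y z : 'cV[R]_n, mxmaxnorm (y - x0) < r -> mxmaxnorm (z - x0) < r ->
      mxmaxnorm (h y - h z) <= L * mxmaxnorm (y - z).

Definition phi (R : realType) (n p m : nat)
    (F : 'cV[R]_n -> 'M[R]_(n, p)) (G : 'cV[R]_n -> 'M[R]_(n, m))
    (x : 'cV[R]_n) (u : 'cV[R]_m) : 'M[R]_(n, p + m) :=
  row_mx (F x) (G x *m diag_mx u^T).

Definition mxint (R : realType) (r c : nat) (a b : R)
    (h : R -> 'M[R]_(r, c)) : 'M[R]_(r, c) :=
  \matrix_(i, j) Rintegral (@lebesgue_measure R) `[a, b] (fun s => h s i j).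

Definition xdot (R : realType) (n : nat) (x : R -> 'cV[R]_n) : R -> 'cV[R]_n :=
  fun s => \col_i (derive1 (fun t => x t i 0) s).

Definition is_solution (R : realType) (n p m : nat)
    (f : 'cV[R]_n -> 'cV[R]_n) (g : 'cV[R]_n -> 'M[R]_(n, m))
    (F : 'cV[R]_n -> 'M[R]_(n, p)) (G : 'cV[R]_n -> 'M[R]_(n, m))
    (theta : 'cV[R]_(p + m)) (I : set R)
    (x : R -> 'cV[R]_n) (u : R -> 'cV[R]_m) : Prop :=
  forall t, interior I t ->
    (forall i : 'I_n, derivable (fun s => x s i 0) t 1) /\
    xdot x t = f (x t) + g (x t) *m u t + phi F G (x t) (u t) *m theta.

Definition DeltaX (R : realType) (n : nat) (dt : R) (x : R -> 'cV[R]_n) (t : R) :=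
  mxint (t - dt) t (xdot x).
Definition calF (R : realType) (n : nat) (f : 'cV[R]_n -> 'cV[R]_n) (dt : R)
    (x : R -> 'cV[R]_n) (t : R) :=
  mxint (t - dt) t (fun s => f (x s)).
Definition calG (R : realType) (n m : nat) (g : 'cV[R]_n -> 'M[R]_(n, m)) (dt : R)
    (x : R -> 'cV[R]_n) (u : R -> 'cV[R]_m) (t : R) :=
  mxint (t - dt) t (fun s => g (x s) *m u s).
Definition calS (R : realType) (n p m : nat)
    (F : 'cV[R]_n -> 'M[R]_(n, p)) (G : 'cV[R]_n -> 'M[R]_(n, m)) (dt : R)
    (x : R -> 'cV[R]_n) (u : R -> 'cV[R]_m) (t : R) :=
  mxint (t - dt) t (fun s => phi F G (x s) (u s)).

Definition box (R : realType) (q : nat) (lo hi : 'I_q -> R) : set 'cV[R]_q :=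
  [set th | forall i, lo i <= th i 0 <= hi i].

Definition is_min_coord (R : realType) (q : nat) (S : set 'cV[R]_q) (i : 'I_q) (v : R) :=
  (exists2 th, S th & th i 0 = v) /\ (forall th, S th -> v <= th i 0).
Definition is_max_coord (R : realType) (q : nat) (S : set 'cV[R]_q) (i : 'I_q) (v : R) :=
  (exists2 th, S th & th i 0 = v) /\ (forall th, S th -> th i 0 <= v).

(* LP feasible set at step k >= 1, given the previous box Xi_{k-1} = box lo hi *)
Definition feasible (R : realType) (n q : nat) (eps : R) (Mk : nat)
    (dX Fc Gc : nat -> 'cV[R]_n) (S : nat -> 'M[R]_(n, q))
    (lo hi : 'I_q -> R) : set 'cV[R]_q :=
  [set th | (forall j, (j < Mk)%N -> forall r : 'I_n,
      - eps <= (dX j - Fc j - Gc j - S j *m th) r 0 <= eps)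
    /\ box lo hi th].

From HB Require Import structures.
From mathcomp Require Import all_boot all_order all_algebra.
From mathcomp Require Import all_classical all_reals all_analysis.
Set Implicit Arguments. Unset Strict Implicit. Unset Printing Implicit Defensive.
Import Order.TTheory GRing.Theory Num.Theory.
Import numFieldNormedType.Exports.
Local Open Scope classical_set_scope.
Local Open Scope ring_scope.

(* Along the solution the state equation holds on the interior of I, so integrating it over a
   window [tau - dt, tau] inside I gives Delta x = calF + calG + calS theta exactly: the two
   endpoints of the window, where the equation may fail, form a Lebesgue-null set. Every entry
   of the history stack therefore has zero residual at the true theta, which is thus feasible
   for the k-th linear programs as soon as it lies in Xi_(k-1); by induction theta lies in
   every Xi_k. Each Xi_k is the bounding box of a subset of Xi_(k-1), hence contained in it. *)

Section real_integrals.
Context d (T : measurableType d) (R : realType).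
Variables (mu : {measure set T -> \bar R}) (D : set T).
Hypothesis mD : measurable D.

Lemma integrableZr_EFin (h : T -> R) (k : R) :
  mu.-integrable D (EFin \o h) -> mu.-integrable D (EFin \o fun x => h x * k).
Proof. by move=> ih; exact: eq_integrable mD _ _ _ (integrableZr mD k ih). Qed.

Lemma integrable_Rsum (I : Type) (s : seq I) (h : I -> T -> R) :
  (forall i, mu.-integrable D (EFin \o h i)) ->
  mu.-integrable D (EFin \o fun x => \sum_(i <- s) h i x).
Proof.
move=> ih; apply: eq_integrable mD _ _ _ (integrable_sum mD s (P := predT) (fun i _ => ih i)).
by move=> x _ /=; rewrite sumEFin.
Qed.

Lemma Rintegral_sum (I : Type) (s : seq I) (h : I -> T -> R) :
  (forall i, mu.-integrable D (EFin \o h i)) ->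
  \int[mu]_(x in D) (\sum_(i <- s) h i x) = \sum_(i <- s) \int[mu]_(x in D) h i x.
Proof.
move=> ih; elim: s => [|i s IH].
  by under eq_Rintegral do rewrite big_nil; rewrite Rintegral_cst// mul0r big_nil.
under eq_Rintegral do rewrite big_cons.
by rewrite RintegralD// ?IH ?big_cons//; exact: integrable_Rsum.
Qed.

End real_integrals.

Section interval_integral.
Context {R : realType}.
Local Notation mu := (@lebesgue_measure R).

Lemma itvoo_sub_interior (I : set R) (a b : R) :
  is_interval I -> I a -> I b -> `]a, b[ `<=` I°.
Proof.
move=> iI Ia Ib z; rewrite -(interior_itv_bnd a b true false).
suff abI : `[a, b] `<=` I by exact: interiorS abI z.
by move=> {}z /=; rewrite in_itv/=; exact: iI.
Qed.

Lemma Rintegral_itv_cc_oo (a b : R) (h : R -> R) : measurable_fun `]a, b[ h ->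
  \int[mu]_(x in `[a, b]) h x = \int[mu]_(x in `]a, b[) h x.
Proof.
move=> mh; congr fine.
exact/integral_itv_bndoo/measurable_realfun.measurable_EFinP.
Qed.

Lemma eq_Rintegral_itv_oo (a b : R) (h1 h2 : R -> R) :
  measurable_fun `]a, b[ h2 -> {in `]a, b[, h1 =1 h2} ->
  \int[mu]_(x in `[a, b]) h1 x = \int[mu]_(x in `[a, b]) h2 x.
Proof.
move=> mh2 e12; have mh1 : measurable_fun `]a, b[ h1.
  by apply: (eq_measurable_fun h2 _ mh2) => z /set_mem zab; rewrite e12.
rewrite !Rintegral_itv_cc_oo//.
by apply: eq_Rintegral => z /set_mem /e12.
Qed.

End interval_integral.

Definition mx_integrable (R : realType) (a b : R) (r c : nat) (h : R -> 'M[R]_(r, c)) :=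
  forall i j, (@lebesgue_measure R).-integrable `[a, b] (EFin \o fun s => h s i j).

Section mxint.
Context (R : realType) (a b : R).
Local Notation mu := (@lebesgue_measure R).

Lemma mx_integrable_col (n : nat) (h : R -> 'cV[R]_n) :
  (forall i, mu.-integrable `[a, b] (EFin \o fun s => h s i 0)) ->
  mx_integrable a b h.
Proof. by move=> ih i j; rewrite (ord1 j). Qed.

Lemma mx_integrableD (r c : nat) (h1 h2 : R -> 'M[R]_(r, c)) :
  mx_integrable a b h1 -> mx_integrable a b h2 -> mx_integrable a b (fun s => h1 s + h2 s).
Proof.
move=> i1 i2 i j; apply: eq_integrable _ _ _ _ (integrableD _ (i1 i j) (i2 i j)) => //.
by move=> s _ /=; rewrite mxE EFinD.
Qed.

Lemma mx_integrable_mulmxr (r c q : nat) (A : R -> 'M[R]_(r, c)) (B : 'M[R]_(c, q)) :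
  mx_integrable a b A -> mx_integrable a b (fun s => A s *m B).
Proof.
move=> iA i j.
have -> : (fun s => (A s *m B) i j) = fun s => \sum_k A s i k * B k j.
  by apply/funext => s; rewrite mxE.
by apply: integrable_Rsum => // k; exact: integrableZr_EFin.
Qed.

Lemma mxintD (r c : nat) (h1 h2 : R -> 'M[R]_(r, c)) :
  mx_integrable a b h1 -> mx_integrable a b h2 ->
  mxint a b (fun s => h1 s + h2 s) = mxint a b h1 + mxint a b h2.
Proof.
move=> i1 i2; apply/matrixP => i j; rewrite !mxE.
by under eq_Rintegral do rewrite mxE; exact: RintegralD.
Qed.

Lemma mxint_mulmxr (r c q : nat) (A : R -> 'M[R]_(r, c)) (B : 'M[R]_(c, q)) :
  mx_integrable a b A -> mxint a b (fun s => A s *m B) = mxint a b A *m B.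
Proof.
move=> iA; apply/matrixP => i j; rewrite !mxE.
under eq_Rintegral do rewrite mxE.
rewrite Rintegral_sum//; last by move=> k; exact: integrableZr_EFin.
by apply: eq_bigr => k _; rewrite mxE RintegralZr.
Qed.

Lemma eq_mxint_itv_oo (r c : nat) (h1 h2 : R -> 'M[R]_(r, c)) :
  mx_integrable a b h2 -> {in `]a, b[, h1 =1 h2} -> mxint a b h1 = mxint a b h2.
Proof.
move=> i2 e12; apply/matrixP => i j; rewrite !mxE.
apply: eq_Rintegral_itv_oo => [|s /e12 -> //].
move/measurable_realfun.measurable_EFinP: (measurable_int _ (i2 i j)).
by apply: measurable_funS => // s; rewrite /= !in_itv/= => /andP[/ltW -> /ltW ->].
Qed.

End mxint.

Lemma DeltaX_integrated_model (R : realType) (n p m : nat)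
    (f : 'cV[R]_n -> 'cV[R]_n) (g : 'cV[R]_n -> 'M[R]_(n, m))
    (F : 'cV[R]_n -> 'M[R]_(n, p)) (G : 'cV[R]_n -> 'M[R]_(n, m))
    (theta : 'cV[R]_(p + m)) (I : set R) (x : R -> 'cV[R]_n) (u : R -> 'cV[R]_m)
    (dt t : R) :
  is_solution f g F G theta I x u -> `]t - dt, t[ `<=` I° ->
  mx_integrable (t - dt) t (fun s => f (x s)) ->
  mx_integrable (t - dt) t (fun s => g (x s) *m u s) ->
  mx_integrable (t - dt) t (fun s => phi F G (x s) (u s)) ->
  DeltaX dt x t = calF f dt x t + calG g dt x u t + calS F G dt x u t *m theta.
Proof.
move=> sol sub iF iG iS.
rewrite /DeltaX /calF /calG /calS -mxint_mulmxr// -!mxintD//; last first.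
- exact: mx_integrable_mulmxr.
- exact: mx_integrableD.
apply: eq_mxint_itv_oo => [|s /sub /sol[_ ->]//].
by apply: mx_integrableD; [exact: mx_integrableD|exact: mx_integrable_mulmxr].
Qed.

Section bounding_box.
Context {R : realType} {q : nat}.
Implicit Types (S : set 'cV[R]_q) (lo hi : 'I_q -> R).

Definition is_bounding_box S lo hi :=
  forall i, is_min_coord S i (lo i) /\ is_max_coord S i (hi i).

Lemma subset_bounding_box S lo hi : is_bounding_box S lo hi -> S `<=` box lo hi.
Proof.
move=> bb th Sth i; have [[_ lo_min] [_ hi_max]] := bb i.
by rewrite lo_min ?hi_max.
Qed.

Lemma bounding_box_subset S lo hi lo' hi' :
  is_bounding_box S lo' hi' -> S `<=` box lo hi -> box lo' hi' `<=` box lo hi.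
Proof.
move=> bb Sbox th th_box i; have [[[th1 S1 th1E] _] [[th2 S2 th2E] _]] := bb i.
have /andP[lo_th1 _] := Sbox _ S1 i; have /andP[_ th2_hi] := Sbox _ S2 i.
have /andP[] := th_box i; rewrite -th1E -th2E => th1_th th_th2.
by rewrite (le_trans lo_th1 th1_th) (le_trans th_th2 th2_hi).
Qed.

End bounding_box.

Lemma feasible_consistent (R : realType) (n q : nat) (eps : R) (Mk : nat)
    (dX Fc Gc : nat -> 'cV[R]_n) (S : nat -> 'M[R]_(n, q)) (lo hi : 'I_q -> R)
    (th : 'cV[R]_q) :
  0 <= eps -> (forall j, (j < Mk)%N -> dX j = Fc j + Gc j + S j *m th) ->
  box lo hi th -> feasible eps Mk dX Fc Gc S lo hi th.
Proof.
move=> eps_ge0 consistent th_box; split=> // j jM r.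
by rewrite consistent// -!addrA -!opprD !addrA subrr mxE oppr_le0 eps_ge0.
Qed.

Theorem lemma4 (R : realType) (n p m : nat)
  (f : 'cV[R]_n -> 'cV[R]_n) (g : 'cV[R]_n -> 'M[R]_(n, m))
  (F : 'cV[R]_n -> 'M[R]_(n, p)) (G : 'cV[R]_n -> 'M[R]_(n, m))
  (thlo thhi : 'I_(p + m) -> R) (theta : 'cV[R]_(p + m))
  (I : set R) (x : R -> 'cV[R]_n) (u : R -> 'cV[R]_m)
  (dt eps : R) (tk : nat -> R)
  (M : R -> nat) (dXs Fs Gs : R -> nat -> 'cV[R]_n) (Ss : R -> nat -> 'M[R]_(n, p + m))
  (lo hi : nat -> 'I_(p + m) -> R) :
  locally_lipschitz f -> locally_lipschitz g ->
  box thlo thhi theta ->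
  is_interval I -> I `<=` `[0, +oo[ -> I 0 ->
  is_solution f g F G theta I x u ->
  (* the integrals in the definitions of calF, calG, calS exist *)
  (forall t, I t -> dt <= t ->
     (forall i : 'I_n, (@lebesgue_measure R).-integrable `[t - dt, t]
        (EFin \o (fun s => f (x s) i 0))) /\
     (forall i : 'I_n, (@lebesgue_measure R).-integrable `[t - dt, t]
        (EFin \o (fun s => (g (x s) *m u s) i 0))) /\
     (forall (i : 'I_n) (j : 'I_(p + m)), (@lebesgue_measure R).-integrable `[t - dt, t]
        (EFin \o (fun s => phi F G (x s) (u s) i j)))) ->
  0 < dt -> 0 < eps ->
  tk 0%N = 0 -> (forall k, tk k < tk k.+1) ->
  (* history stack *)
  (forall t, 0 <= t -> forall j, (j < M t)%N ->
     exists tau, I tau /\ dt <= tau <= t /\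
       dXs t j = DeltaX dt x tau /\ Fs t j = calF f dt x tau /\
       Gs t j = calG g dt x u tau /\ Ss t j = calS F G dt x u tau) ->
  (* the recursion Xi_0 = Theta, Xi_k = box of LP minima / maxima *)
  lo 0%N = thlo -> hi 0%N = thhi ->
  (forall k (i : 'I_(p + m)),
     is_min_coord (feasible eps (M (tk k.+1)) (dXs (tk k.+1)) (Fs (tk k.+1))
                     (Gs (tk k.+1)) (Ss (tk k.+1)) (lo k) (hi k)) i (lo k.+1 i) /\
     is_max_coord (feasible eps (M (tk k.+1)) (dXs (tk k.+1)) (Fs (tk k.+1))
                     (Gs (tk k.+1)) (Ss (tk k.+1)) (lo k) (hi k)) i (hi k.+1 i)) ->
  (forall k, (0 < k)%N ->
     box (lo k) (hi k) `<=` box (lo k.-1) (hi k.-1) /\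
     box (lo k.-1) (hi k.-1) `<=` box thlo thhi) /\
  (forall k, box (lo k) (hi k) theta).
Proof.
move=> _ _ th_Theta Iint _ I0 sol integ dt_gt0 eps_gt0 tk0 tk_incr hist lo0 hi0 bb.
have tk_ge0 k : 0 <= tk k.
  by elim: k => [|k IH]; [rewrite tk0 | exact: le_trans IH (ltW (tk_incr k))].
have stack_consistent k j : (j < M (tk k.+1))%N ->
    dXs (tk k.+1) j = Fs (tk k.+1) j + Gs (tk k.+1) j + Ss (tk k.+1) j *m theta.
  move=> jM; have [tau [Itau [/andP[dt_tau _] [-> [-> [-> ->]]]]]] := hist _ (tk_ge0 k.+1) j jM.
  have [iF [iG iS]] := integ _ Itau dt_tau.
  have I_start : I (tau - dt).
    by apply: (Iint 0 tau) => //; rewrite subr_ge0 dt_tau gerBl ltW.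
  apply: DeltaX_integrated_model sol _ (mx_integrable_col iF) (mx_integrable_col iG) iS.
  exact: itvoo_sub_interior Iint I_start Itau.
have nested k : box (lo k.+1) (hi k.+1) `<=` box (lo k) (hi k).
  by apply: bounding_box_subset (bb k) _ => th [].
have th_Xi k : box (lo k) (hi k) theta.
  elim: k => [|k IH]; first by rewrite lo0 hi0.
  exact: subset_bounding_box (bb k) _ (feasible_consistent (ltW eps_gt0) (stack_consistent k) IH).
have sub_Theta k : box (lo k) (hi k) `<=` box thlo thhi.
  by elim: k => [|k IH]; [rewrite lo0 hi0 | exact: subset_trans (nested k) IH].
by split=> // -[//|k] _; split; [exact: nested | exact: sub_Theta].
Qed.
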